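(* For all positive integers $p,q$, \[ L_e(p,q) \geq \sum_{i=1}^{\frac{(p-1)(p-2)}{2}+1} M_p(i)\, N_e(q)^i\, N_s(q)^{\frac{p(p-1)}{2}-i}\, 2^{\frac{pq(q-1)}{2}}. \]
   Context: All graphs are simple undirected labeled graphs on the vertex set $\{1,\dots,n\}$. For such a graph with adjacency matrix $W$ and degree matrix $D$, its Laplacian is $L = D - W$; if the graph has at least one edge, its normalized Laplacian matrix is $\frac{1}{\mathrm{Tr}(L)}L$, which is a density matrix (Hermitian, positive semidefinite, trace $1$). An $n\times n$ density matrix $\rho$ with $n=pq$ is separable in $\mathbb{C}^p\otimes\mathbb{C}^q$ if $\rho=\sum_i c_i\,\rho_i\otimes\eta_i$ (finite sum) where the $\rho_i$ are $p\times p$ density matrices, the $\eta_i$ are $q\times q$ density matrices, $c_i\ge 0$ and $\sum_i c_i=1$; otherwise it is entangled. $L_s(p,q)$ denotes the number of labeled graphs on $n=pq$ vertices with at least one edge whose normalized Laplacian matrix is separable in $\mathbb{C}^p\otimes\mathbb{C}^q$, and $L_e(p,q)$ the number of those whose normalized Laplacian is entangled; thus $L_s(p,q)+L_e(p,q)=L(pq):=2^{pq(pq-1)/2}-1$. A square matrix is line sum symmetric if for each $i$ its $i$-th row sum equals its $i$-th column sum. $N_s(n)$ denotes the number of $n\times n$ matrices with entries in $\{0,1\}$ that are line sum symmetric, and $N_e(n)=2^{n^2}-N_s(n)$ the number of $n\times n$ $0$-$1$ matrices that are not line sum symmetric. For positive integers $n$ and nonnegative integers $i$, $M_n(i)$ denotes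 the number of symmetric $n\times n$ matrices with entries in $\{0,1\}$, all diagonal entries $0$, exactly $2i$ nonzero entries, and at least one row containing exactly one entry equal to $1$ (equivalently, the number of labeled graphs on $n$ vertices with $i$ edges having at least one vertex of degree $1$). *)

From HB Require Import structures.
From mathcomp Require Import all_boot all_order all_algebra.
From mathcomp Require Import algC.
From Stdlib Require Import ClassicalEpsilon.
Set Implicit Arguments. Unset Strict Implicit. Unset Printing Implicit Defensive.
Import Order.TTheory GRing.Theory Num.Theory.
Local Open Scope ring_scope.

Definition asbool (P : Prop) : bool :=
  if excluded_middle_informative P then true else false.

Definition adjmx m n (A : 'M[algC]_(m, n)) : 'M[algC]_(n, m) :=
  map_mx (fun x => x^*) A^T.

Definition density_matrix n (A : 'M[algC]_n) : Prop :=
  [/\ adjmx A = A,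
      (forall v : 'cV[algC]_n, 0 <= (adjmx v *m A *m v) 0 0)
    & \tr A = 1].

(* index k of C^{pq} = C^p (x) C^q corresponds to the pair (k / q, k mod q) *)
Lemma idx_div_lt p q (k : 'I_(p * q)) : (k %/ q < p)%N.
Proof.
case: q k => [|q] k; first by case: k => k; rewrite muln0.
by rewrite ltn_divLR.
Qed.

Lemma idx_mod_lt p q (k : 'I_(p * q)) : (k %% q < q)%N.
Proof.
case: q k => [|q] k; first by case: k => k; rewrite muln0.
by rewrite ltn_mod.
Qed.

Definition idx1 p q (k : 'I_(p * q)) : 'I_p := Ordinal (idx_div_lt k).
Definition idx2 p q (k : 'I_(p * q)) : 'I_q := Ordinal (idx_mod_lt k).

Definition kronmx p q (A : 'M[algC]_p) (B : 'M[algC]_q) : 'M[algC]_(p * q) :=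
  \matrix_(k, l) (A (idx1 k) (idx1 l) * B (idx2 k) (idx2 l)).

Definition separable p q (rho : 'M[algC]_(p * q)) : Prop :=
  exists (m : nat) (c : 'I_m -> algC) (r : 'I_m -> 'M[algC]_p)
         (e : 'I_m -> 'M[algC]_q),
    [/\ forall i, 0 <= c i,
        \sum_(i < m) c i = 1,
        forall i, density_matrix (r i),
        forall i, density_matrix (e i)
      & rho = \sum_(i < m) c i *: kronmx (r i) (e i)].

(* simple graphs on {1..n} (here 'I_n) via 0-1 adjacency matrices *)
Definition is_graph n (W : 'M[bool]_n) : bool :=
  [forall i, forall j, W i j == W j i] && [forall i, ~~ W i i].

Definition has_edge n (W : 'M[bool]_n) : bool := [exists i, exists j, W i j].

Definition laplacian n (W : 'M[bool]_n) : 'M[algC]_n :=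
  \matrix_(i, j) ((i == j)%:R * (\sum_(k < n) (W i k)%:R) - (W i j)%:R).

Definition norm_laplacian n (W : 'M[bool]_n) : 'M[algC]_n :=
  (\tr (laplacian W))^-1 *: laplacian W.

Definition L_s p q : nat :=
  #|[set W : 'M[bool]_(p * q) | [&& is_graph W, has_edge W &
        asbool (@separable p q (norm_laplacian W))]]|.
Definition L_e p q : nat :=
  #|[set W : 'M[bool]_(p * q) | [&& is_graph W, has_edge W &
        asbool (~ @separable p q (norm_laplacian W))]]|.

Definition line_sum_symmetric n (A : 'M[bool]_n) : bool :=
  [forall i, (\sum_(j < n) (A i j : nat) == \sum_(j < n) (A j i : nat))%N].

Definition N_s n : nat := #|[set A : 'M[bool]_n | line_sum_symmetric A]|.
Definition N_e n : nat := (2 ^ (n * n) - N_s n)%N.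

Definition M_ n i : nat :=
  #|[set W : 'M[bool]_n | [&& is_graph W,
       (\sum_(a < n) \sum_(b < n) (W a b : nat) == 2 * i)%N &
       [exists a, (\sum_(b < n) (W a b : nat) == 1)%N]]]|.

From HB Require Import structures.
From mathcomp Require Import all_boot all_order all_algebra.
From mathcomp Require Import algC zify ring.
From Stdlib Require Import ClassicalEpsilon.
Set Implicit Arguments. Unset Strict Implicit. Unset Printing Implicit Defensive.
Import Order.TTheory GRing.Theory Num.Theory.

(* If the normalized Laplacian of a graph on C^p (x) C^q is separable, then
   every vertex (a, x) has the same degree in the graph and in its partial
   transpose: all row sums of the Laplacian vanish, so in a decomposition
   sum_i c_i r_i (x) e_i every term has vanishing row sums in one of its
   positive semidefinite factors, a property that partial transposition keeps.
   Now take a graph H on p vertices with i edges and a pendant vertex a, and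
   glue a graph on pq vertices out of q x q blocks: a block that is not line
   sum symmetric for each edge of H, a line sum symmetric block for each
   non-edge, and an arbitrary graph on q vertices for each diagonal block.
   In the row of blocks of a only the block of the unique edge at a is not
   line sum symmetric, so the degree criterion fails there. The glued graph
   determines H and all the blocks, which yields the stated number of
   distinct entangled graphs for each i. *)

Section TensorIndex.
Variables p q : nat.

Lemma tensor_idx_subproof (a : 'I_p) (x : 'I_q) : (a * q + x < p * q)%N.
Proof.
have : (a.+1 * q <= p * q)%N by rewrite leq_mul2r ltn_ord orbT.
by rewrite mulSn; have := ltn_ord x; lia.
Qed.

Definition tensor_idx (a : 'I_p) (x : 'I_q) : 'I_(p * q) :=
  Ordinal (tensor_idx_subproof a x).

Lemma idx1_tensor a x : idx1 (tensor_idx a x) = a.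
Proof.
have q_gt0 : (0 < q)%N by case: q x => [[]|].
by apply: val_inj => /=; rewrite divnMDl // divn_small ?addn0.
Qed.

Lemma idx2_tensor a x : idx2 (tensor_idx a x) = x.
Proof. by apply: val_inj => /=; rewrite modnMDl modn_small. Qed.

Lemma tensor_idxK k : tensor_idx (idx1 k) (idx2 k) = k.
Proof. by apply: val_inj => /=; rewrite -divn_eq. Qed.

Lemma eq_tensor_idx a b x y :
  (tensor_idx a x == tensor_idx b y) = (a == b) && (x == y).
Proof.
apply/eqP/andP => [e | [/eqP-> /eqP->]] //; split; apply/eqP.
  by rewrite -(idx1_tensor a x) e idx1_tensor.
by rewrite -(idx2_tensor a x) e idx2_tensor.
Qed.

Lemma big_tensor_idx (R : Type) (idx : R) (op : Monoid.com_law idx)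
    (F : 'I_(p * q) -> R) :
  \big[op/idx]_k F k = \big[op/idx]_a \big[op/idx]_x F (tensor_idx a x).
Proof.
rewrite pair_bigA (reindex (fun ax : 'I_p * 'I_q => tensor_idx ax.1 ax.2)) //=.
exists (fun k => (idx1 k, idx2 k)) => [[a x] _ | k _] /=.
  by rewrite idx1_tensor idx2_tensor.
exact: tensor_idxK.
Qed.

End TensorIndex.

Local Open Scope ring_scope.

Definition row_sum m n (A : 'M[algC]_(m, n)) i := \sum_j A i j.

Lemma adjmx_form n (A : 'M[algC]_n) (v w : 'cV_n) :
  (adjmx w *m A *m v) 0 0 = \sum_i \sum_j (w i 0)^* * A i j * v j 0.
Proof.
rewrite mxE exchange_big /=; apply: eq_bigr => j _.
by rewrite mxE big_distrl /=; apply: eq_bigr => i _; rewrite !mxE.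
Qed.

Lemma hermitian_entry n (A : 'M[algC]_n) i j : adjmx A = A -> A j i = (A i j)^*.
Proof. by move=> hA; rewrite -{1}hA !mxE. Qed.

Lemma adjmxD m n (v w : 'M[algC]_(m, n)) : adjmx (v + w) = adjmx v + adjmx w.
Proof. by apply/matrixP => i j; rewrite !mxE rmorphD. Qed.

Lemma adjmxZ m n t (v : 'M[algC]_(m, n)) : adjmx (t *: v) = t^* *: adjmx v.
Proof. by apply/matrixP => i j; rewrite !mxE rmorphM. Qed.

Section PositiveSemidefinite.
Variables (n : nat) (A : 'M[algC]_n).
Hypotheses (A_herm : adjmx A = A)
  (A_psd : forall u : 'cV_n, 0 <= (adjmx u *m A *m u) 0 0).

Lemma psd_form_eq0 (v w : 'cV_n) :
  (adjmx v *m A *m v) 0 0 = 0 -> (adjmx w *m A *m v) 0 0 = 0.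
Proof.
move=> vAv0; set Z := (adjmx w *m A *m v) 0 0; set Q := (adjmx w *m A *m w) 0 0.
have vAw : (adjmx v *m A *m w) 0 0 = Z^*.
  rewrite /Z !adjmx_form rmorph_sum exchange_big /=; apply: eq_bigr => i _.
  rewrite rmorph_sum; apply: eq_bigr => j _.
  by rewrite !rmorphM /= conjCK (hermitian_entry i j A_herm); ring.
have Q_ge0 : 0 <= Q by apply: A_psd.
have form_at t : (adjmx (v + t *: w) *m A *m (v + t *: w)) 0 0 =
    t * Z^* + t^* * Z + t^* * t * Q.
  rewrite adjmxD adjmxZ !mulmxDl !mulmxDr -!scalemxAl -!scalemxAr !mxE.
  by move: vAv0 vAw; rewrite /Z /Q !mxE => -> ->; ring.
(* At t = -Z/(Q+1) the form equals -|Z|^2 (Q+2)/(Q+1)^2, which must be >= 0. *)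
have Q1_neq0 : Q + 1 != 0 by rewrite lt0r_neq0 // ltr_wpDl.
have Q2_neq0 : Q + 2 != 0 by rewrite lt0r_neq0 // ltr_wpDl.
have := A_psd (v + (- Z / (Q + 1)) *: w).
rewrite form_at rmorphM rmorphN /= fmorphV rmorphD rmorph1 /= (geC0_conj Q_ge0).
have -> : - Z / (Q + 1) * Z^* + - Z^* / (Q + 1) * Z
    + - Z^* / (Q + 1) * (- Z / (Q + 1)) * Q
    = - ((Z * Z^*) * (Q + 2) / (Q + 1) ^+ 2) by field.
rewrite oppr_ge0 => le0.
have ge0 : 0 <= (Z * Z^*) * (Q + 2) / (Q + 1) ^+ 2.
  by rewrite -normCK !(divr_ge0, mulr_ge0, exprn_ge0, addr_ge0).
have /eqP : Z * Z^* * (Q + 2) / (Q + 1) ^+ 2 = 0 by apply: le_anti; rewrite le0.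
by rewrite !mulf_eq0 invr_eq0 expf_eq0 (negPf Q1_neq0) (negPf Q2_neq0)
  conjC_eq0 !orbF orbb => /eqP.
Qed.

Lemma form_const1 :
  (adjmx (const_mx 1 : 'cV_n) *m A *m (const_mx 1 : 'cV_n)) 0 0 = \sum_a row_sum A a.
Proof.
rewrite adjmx_form; apply: eq_bigr => a _; apply: eq_bigr => b _.
by rewrite !mxE rmorph1 mul1r mulr1.
Qed.

Lemma psd_sum_row_sum_ge0 : 0 <= \sum_a row_sum A a.
Proof. by rewrite -form_const1. Qed.

Lemma psd_row_sum_eq0 : \sum_a row_sum A a = 0 -> forall a, row_sum A a = 0.
Proof.
rewrite -form_const1 => /psd_form_eq0 sum0 a; rewrite -(sum0 (delta_mx a 0)).
rewrite adjmx_form (bigD1 a) //= [X in _ + X]big1 ?addr0 => [|i /negPf ia].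
  by apply: eq_bigr => b _; rewrite !mxE !eqxx /= rmorph1 mul1r mulr1.
by apply: big1 => j _; rewrite !mxE ia /= rmorph0 !mul0r.
Qed.

End PositiveSemidefinite.

Section SeparableDecomposition.
Variables (p q m : nat) (c : 'I_m -> algC).
Variables (r : 'I_m -> 'M[algC]_p) (e : 'I_m -> 'M[algC]_q).
Hypotheses (c_ge0 : forall i, 0 <= c i)
  (r_dens : forall i, density_matrix (r i)) (e_dens : forall i, density_matrix (e i)).

Let rho := \sum_(i < m) c i *: kronmx (r i) (e i).

Lemma kron_sum_entry a b x y :
  rho (tensor_idx a x) (tensor_idx b y) = \sum_i c i * (r i a b * e i x y).
Proof.
by rewrite summxE; apply: eq_bigr => i _; rewrite !mxE !idx1_tensor !idx2_tensor.
Qed.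

Lemma kron_block_sum a (f : 'I_m -> 'I_q -> algC) :
  \sum_b \sum_y \sum_i c i * (r i a b * f i y)
  = \sum_i c i * (row_sum (r i) a * \sum_y f i y).
Proof.
under eq_bigr do rewrite exchange_big /=.
rewrite exchange_big /=; apply: eq_bigr => i _.
rewrite /row_sum big_distrl big_distrr /=; apply: eq_bigr => b _.
by rewrite !big_distrr /=; apply: eq_bigr => y _; ring.
Qed.

Lemma kron_row_sum a x :
  row_sum rho (tensor_idx a x) = \sum_i c i * (row_sum (r i) a * row_sum (e i) x).
Proof.
rewrite /row_sum big_tensor_idx -kron_block_sum.
by apply: eq_bigr => b _; apply: eq_bigr => y _; rewrite kron_sum_entry.
Qed.

Hypothesis rho_row_sum0 : forall k, row_sum rho k = 0.

(* The row sums of rho add up to sum_i c_i (sum of r_i) (sum of e_i), a sum of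
   nonnegative terms, so each term vanishes. *)
Lemma kron_term_row_sum_eq0 i :
  [\/ c i = 0, forall a, row_sum (r i) a = 0 | forall x, row_sum (e i) x = 0].
Proof.
have term_ge0 j : 0 <= c j * ((\sum_a row_sum (r j) a) * \sum_x row_sum (e j) x).
  have [[? ? _] [? ? _]] := (r_dens j, e_dens j).
  by rewrite !mulr_ge0 ?psd_sum_row_sum_ge0.
have total0 : \sum_j c j * ((\sum_a row_sum (r j) a) * \sum_x row_sum (e j) x) = 0.
  transitivity (\sum_a \sum_x row_sum rho (tensor_idx a x)); last first.
    by apply: big1 => a _; apply: big1 => x _.
  under [RHS]eq_bigr do under eq_bigr do rewrite kron_row_sum.
  under [RHS]eq_bigr do rewrite exchange_big /=.
  rewrite [RHS]exchange_big /=; apply: eq_bigr => j _.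
  rewrite big_distrl big_distrr /=; apply: eq_bigr => a _.
  by rewrite !big_distrr /=; apply: eq_bigr => x _; ring.
have /eqP := psumr_eq0P (fun j _ => term_ge0 j) total0 (i := i) isT.
have [[r_herm r_psd _] [e_herm e_psd _]] := (r_dens i, e_dens i).
rewrite !mulf_eq0 => /or3P[/eqP|/eqP/(psd_row_sum_eq0 r_herm r_psd)|
  /eqP/(psd_row_sum_eq0 e_herm e_psd)]; by [constructor 1|constructor 2|constructor 3].
Qed.

Lemma kron_ptrans_row_sum_eq0 a x :
  \sum_b \sum_y rho (tensor_idx a y) (tensor_idx b x) = 0.
Proof.
under eq_bigr do under eq_bigr do rewrite kron_sum_entry.
rewrite kron_block_sum; apply: big1 => i _.
have [e_herm _ _] := e_dens i.
have -> : \sum_y e i y x = (row_sum (e i) x)^*.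
  by rewrite rmorph_sum; apply: eq_bigr => y _; rewrite (hermitian_entry x y e_herm).
by case: (kron_term_row_sum_eq0 i) => [->|->|->]; rewrite ?conjC0 !(mul0r, mulr0).
Qed.

End SeparableDecomposition.

Lemma separable_ptrans_row_sum_eq0 p q (rho : 'M[algC]_(p * q)) :
  separable rho -> (forall k, row_sum rho k = 0) ->
  forall a x, \sum_b \sum_y rho (tensor_idx a y) (tensor_idx b x) = 0.
Proof. by case=> m [c [r [e [? _ ? ? ->]]]]; apply: kron_ptrans_row_sum_eq0. Qed.

Definition deg n (W : 'M[bool]_n) k : nat := \sum_l W k l.

Definition ptrans_deg p q (W : 'M[bool]_(p * q)) a x : nat :=
  \sum_b \sum_y W (tensor_idx a y) (tensor_idx b x).

Lemma is_graph_sym n (W : 'M[bool]_n) a b : is_graph W -> W a b = W b a.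
Proof. by case/andP=> /forallP/(_ a)/forallP/(_ b)/eqP. Qed.

Lemma is_graph_irrefl n (W : 'M[bool]_n) a : is_graph W -> W a a = false.
Proof. by case/andP=> _ /forallP/(_ a)/negPf. Qed.

Lemma laplacian_row_sum n (W : 'M[bool]_n) k : row_sum (laplacian W) k = 0.
Proof.
rewrite /row_sum; under eq_bigr do rewrite mxE.
rewrite sumrB -big_distrl /= [X in X * _](bigD1 k) //= eqxx.
rewrite big1 ?addr0 ?mul1r ?subrr //.
by move=> l /negPf; rewrite eq_sym => ->.
Qed.

Lemma laplacian_trace_neq0 n (W : 'M[bool]_n) :
  is_graph W -> has_edge W -> \tr (laplacian W) != 0.
Proof.
move=> W_graph /existsP[a /existsP[b Wab]].
have -> : \tr (laplacian W) = (\sum_k deg W k)%:R.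
  rewrite /mxtrace natr_sum; apply: eq_bigr => k _.
  by rewrite mxE eqxx mul1r (is_graph_irrefl k W_graph) subr0 natr_sum.
by rewrite pnatr_eq0 -lt0n (bigD1 a) //= ltn_addr // /deg (bigD1 b) //= Wab.
Qed.

Lemma laplacian_ptrans_sum p q (W : 'M[bool]_(p * q)) a x :
  \sum_b \sum_y laplacian W (tensor_idx a y) (tensor_idx b x)
  = (deg W (tensor_idx a x))%:R - (ptrans_deg W a x)%:R.
Proof.
under eq_bigr do under eq_bigr do rewrite mxE.
under eq_bigr do rewrite sumrB.
rewrite sumrB /ptrans_deg natr_sum; congr (_ - _); last first.
  by apply: eq_bigr => b _; rewrite natr_sum.
rewrite (bigD1 a) //= [X in _ + X]big1 ?addr0 => [|b /negPf ba]; last first.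
  by apply: big1 => y _; rewrite eq_tensor_idx eq_sym ba mul0r.
rewrite (bigD1 x) //= [X in _ + X]big1 ?addr0 => [|y /negPf yx].
  by rewrite eq_tensor_idx !eqxx mul1r /deg natr_sum.
by rewrite eq_tensor_idx eqxx yx mul0r.
Qed.

Theorem separable_laplacian_ptrans_deg p q (W : 'M[bool]_(p * q)) :
  is_graph W -> has_edge W -> separable (norm_laplacian W) ->
  forall a x, ptrans_deg W a x = deg W (tensor_idx a x).
Proof.
move=> W_graph W_edge W_sep a x.
have norm_row_sum0 k : row_sum (norm_laplacian W) k = 0.
  rewrite /row_sum; under eq_bigr do rewrite mxE.
  by rewrite -mulr_sumr -/(row_sum _ _) laplacian_row_sum mulr0.
have := separable_ptrans_row_sum_eq0 W_sep norm_row_sum0 a x.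
under eq_bigr do under eq_bigr do rewrite mxE.
under eq_bigr do rewrite -mulr_sumr.
rewrite -mulr_sumr laplacian_ptrans_sum => /eqP.
rewrite mulf_eq0 invr_eq0 (negPf (laplacian_trace_neq0 W_graph W_edge)) /=.
by rewrite subr_eq0 eqr_nat eq_sym => /eqP.
Qed.

Local Close Scope ring_scope.

Definition codeg n (W : 'M[bool]_n) k : nat := \sum_l W l k.

Lemma line_sum_symmetricE n (B : 'M[bool]_n) :
  line_sum_symmetric B = [forall x, deg B x == codeg B x].
Proof. by []. Qed.

Definition block p q (W : 'M[bool]_(p * q)) a b : 'M[bool]_q :=
  \matrix_(x, y) W (tensor_idx a x) (tensor_idx b y).

Lemma deg_blocks p q (W : 'M[bool]_(p * q)) a x :
  deg W (tensor_idx a x) = \sum_b deg (block W a b) x.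
Proof.
rewrite /deg big_tensor_idx; apply: eq_bigr => b _.
by apply: eq_bigr => y _; rewrite mxE.
Qed.

Lemma ptrans_deg_blocks p q (W : 'M[bool]_(p * q)) a x :
  ptrans_deg W a x = \sum_b codeg (block W a b) x.
Proof. by apply: eq_bigr => b _; apply: eq_bigr => y _; rewrite mxE. Qed.

Lemma entry_of_not_lss n (B : 'M[bool]_n) :
  ~~ line_sum_symmetric B -> exists x y, B x y.
Proof.
move=> not_lss; case: (pickP (fun xy : 'I_n * 'I_n => B xy.1 xy.2)) => [[x y] | B0].
  by exists x, y.
case/negP: not_lss; apply/forallP => x.
by rewrite /deg /codeg !big1 // => y _; [move: (B0 (y, x)) | move: (B0 (x, y))] => /= ->.
Qed.

Lemma sum_codeg_neq_deg p q (B : 'I_p -> 'M[bool]_q) c :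
  ~~ line_sum_symmetric (B c) -> (forall b, b != c -> line_sum_symmetric (B b)) ->
  exists x, \sum_b codeg (B b) x != \sum_b deg (B b) x.
Proof.
rewrite line_sum_symmetricE => /forallPn[x Bc_x] B_lss; exists x.
rewrite (bigD1 c) // [X in _ != X](bigD1 c) //= eq_sym.
rewrite (eq_bigr (fun b => codeg (B b) x)) ?eqn_add2r // => b /B_lss.
by rewrite line_sum_symmetricE => /forallP/(_ x)/eqP.
Qed.

Theorem unique_nonlss_block_entangled p q (W : 'M[bool]_(p * q)) a c :
  is_graph W -> ~~ line_sum_symmetric (block W a c) ->
  (forall b, b != c -> line_sum_symmetric (block W a b)) ->
  has_edge W /\ ~ separable (norm_laplacian W).
Proof.
move=> W_graph Wac_nonlss Wab_lss.
have W_edge : has_edge W.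
  have [x [y]] := entry_of_not_lss Wac_nonlss; rewrite mxE => Wxy.
  by apply/existsP; exists (tensor_idx a x); apply/existsP; exists (tensor_idx c y).
split=> // W_sep; have [x] := sum_codeg_neq_deg Wac_nonlss Wab_lss.
by rewrite -ptrans_deg_blocks -deg_blocks separable_laplacian_ptrans_deg ?eqxx.
Qed.

Definition strict_upper q :=
  [set B : 'M[bool]_q | [forall x, forall y, B x y ==> (x < y)]].

Definition lss_mx q := [set B : 'M[bool]_q | line_sum_symmetric B].

(* Only the pairs a < b and the diagonal carry data; the slots b < a are
   forced to the zero matrix, so that blocks fit in one finite function. *)
Definition block_choice p q (H : 'M[bool]_p) (ab : 'I_p * 'I_p) : {set 'M[bool]_q} :=
  if ab.1 < ab.2 then (if H ab.1 ab.2 then ~: lss_mx q else lss_mx q)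
  else if ab.2 < ab.1 then [set const_mx false] else strict_upper q.

Definition symmx q (B : 'M[bool]_q) : 'M[bool]_q := \matrix_(x, y) (B x y || B y x).

Definition glue_block p q (F : {ffun 'I_p * 'I_p -> 'M[bool]_q}) (a b : 'I_p) :=
  if a < b then F (a, b) else if b < a then trmx (F (b, a)) else symmx (F (a, a)).

Definition glue p q (F : {ffun 'I_p * 'I_p -> 'M[bool]_q}) : 'M[bool]_(p * q) :=
  \matrix_(k, l) glue_block F (idx1 k) (idx1 l) (idx2 k) (idx2 l).

Section Glue.
Variables p q : nat.
Implicit Types (H : 'M[bool]_p) (F : {ffun 'I_p * 'I_p -> 'M[bool]_q}).

Lemma glue_tensor_idx F a b x y :
  glue F (tensor_idx a x) (tensor_idx b y) = glue_block F a b x y.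
Proof. by rewrite mxE !idx1_tensor !idx2_tensor. Qed.

Lemma block_glue F a b : block (glue F) a b = glue_block F a b.
Proof. by apply/matrixP => x y; rewrite mxE glue_tensor_idx. Qed.

Lemma glue_blockC F a b x y : glue_block F a b x y = glue_block F b a y x.
Proof.
rewrite /glue_block; case: (ltngtP a b) => [_|_|/val_inj ->]; rewrite ?mxE //.
by rewrite orbC.
Qed.

Lemma strict_upper_entry (B : 'M[bool]_q) (x y : 'I_q) :
  B \in strict_upper q -> ~~ (x < y) -> B x y = false.
Proof. by rewrite inE => /forallP/(_ x)/forallP/(_ y)/implyP; apply: contraNF. Qed.

Lemma strict_upper_symmx_inj B1 B2 : B1 \in strict_upper q -> B2 \in strict_upper q ->
  symmx B1 = symmx B2 -> B1 = B2.
Proof.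
move=> B1_up B2_up /matrixP B12; apply/matrixP => x y; have := B12 x y; rewrite !mxE.
have [lt_xy | le_yx] := ltnP x y.
  have nyx : ~~ (y < x) by rewrite -leqNgt ltnW.
  by rewrite (strict_upper_entry B1_up nyx) (strict_upper_entry B2_up nyx) !orbF.
have nxy : ~~ (x < y) by rewrite -leqNgt.
by rewrite (strict_upper_entry B1_up nxy) (strict_upper_entry B2_up nxy).
Qed.

Lemma lss_trmx (B : 'M[bool]_q) : line_sum_symmetric (trmx B) = line_sum_symmetric B.
Proof.
rewrite !line_sum_symmetricE; apply: eq_forallb => x; rewrite eq_sym.
by congr (_ == _); apply: eq_bigr => y _; rewrite mxE.
Qed.

Lemma lss_symmx (B : 'M[bool]_q) : line_sum_symmetric (symmx B).
Proof.
rewrite line_sum_symmetricE; apply/forallP => x; apply/eqP.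
by apply: eq_bigr => y _; rewrite !mxE orbC.
Qed.

Lemma glue_is_graph H F : F \in family (block_choice q H) -> is_graph (glue F).
Proof.
move=> /familyP F_choice; apply/andP; split.
  apply/forallP => k; apply/forallP => l; apply/eqP.
  by rewrite -(tensor_idxK k) -(tensor_idxK l) !glue_tensor_idx glue_blockC.
apply/forallP => k; rewrite -(tensor_idxK k) glue_tensor_idx /glue_block ltnn mxE.
have := F_choice (idx1 k, idx1 k); rewrite /block_choice /= ltnn.
by move/strict_upper_entry->; rewrite ?ltnn.
Qed.

Lemma lss_glue_block H F a b : is_graph H -> F \in family (block_choice q H) ->
  line_sum_symmetric (glue_block F a b) = ~~ H a b.
Proof.
move=> H_graph /familyP F_choice; rewrite /glue_block.
case: (ltngtP a b) => [lt_ab | lt_ba | /val_inj eq_ab].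
- have := F_choice (a, b); rewrite /block_choice /= lt_ab.
  by case: (H a b); rewrite !inE // => /negPf.
- have := F_choice (b, a); rewrite /block_choice /= lt_ba lss_trmx.
  by rewrite (is_graph_sym a b H_graph); case: (H b a); rewrite !inE // => /negPf.
- by rewrite eq_ab lss_symmx (is_graph_irrefl b H_graph).
Qed.

Lemma glue_block_inj H1 H2 F1 F2 :
  F1 \in family (block_choice q H1) -> F2 \in family (block_choice q H2) ->
  (forall a b, glue_block F1 a b = glue_block F2 a b) -> F1 = F2.
Proof.
move=> /familyP F1_choice /familyP F2_choice F12; apply/ffunP => -[a b].
have := F12 a b; have := F1_choice (a, b); have := F2_choice (a, b).
rewrite /block_choice /glue_block /=.
case: (ltngtP a b) => [_ _ _ // | _ | /val_inj <-].
  by rewrite !inE => /eqP-> /eqP->.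
by move=> F2_up F1_up /(strict_upper_symmx_inj F1_up F2_up).
Qed.

Lemma glue_inj H1 H2 F1 F2 : is_graph H1 -> is_graph H2 ->
  F1 \in family (block_choice q H1) -> F2 \in family (block_choice q H2) ->
  glue F1 = glue F2 -> H1 = H2 /\ F1 = F2.
Proof.
move=> H1_graph H2_graph F1_choice F2_choice F12.
have blocks12 a b : glue_block F1 a b = glue_block F2 a b by rewrite -!block_glue F12.
split; last exact: glue_block_inj F1_choice F2_choice blocks12.
apply/matrixP => a b; apply: negb_inj.
rewrite -(lss_glue_block a b H1_graph F1_choice).
by rewrite -(lss_glue_block a b H2_graph F2_choice) blocks12.
Qed.

Lemma glue_entangled H F a : is_graph H -> deg H a == 1 ->
  F \in family (block_choice q H) ->
  has_edge (glue F) /\ ~ separable (norm_laplacian (glue F)).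
Proof.
move=> H_graph Ha_pendant F_choice.
have /cards1P[c Ha] : #|[set b | H a b]| == 1 by rewrite -sum1dep_card big_mkcond.
have Hac b : H a b = (b == c) by rewrite -in_set1 -Ha inE.
apply: (unique_nonlss_block_entangled (a := a) (c := c)).
- exact: glue_is_graph F_choice.
- by rewrite block_glue (lss_glue_block _ _ H_graph F_choice) Hac eqxx.
- move=> b /negPf b_neq_c.
  by rewrite block_glue (lss_glue_block _ _ H_graph F_choice) Hac b_neq_c.
Qed.

End Glue.

Lemma card_family_prod (aT rT : finType) (F : aT -> {set rT}) :
  #|family F| = \prod_x #|F x|.
Proof.
rewrite card_family /image_mem -big_enum /=.
by elim: (enum _) => [|x s IH]; rewrite ?big_nil ?big_cons //= IH.
Qed.

Lemma cards_sum (T : finType) (P : pred T) : #|[set x | P x]| = \sum_x P x.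
Proof. by rewrite -sum1dep_card big_mkcond. Qed.

Lemma prod_nat_cond_const (T : finType) (P : pred T) n :
  \prod_(x | P x) n = n ^ #|[set x | P x]|.
Proof. by rewrite -prod_nat_const; apply: eq_bigl => x; rewrite inE. Qed.

Lemma card_dep_pairs (I T : finType) (P : pred I) (A : I -> {pred T}) :
  #|[set t : I * T | P t.1 && (t.2 \in A t.1)]| = \sum_(i | P i) #|A i|.
Proof.
rewrite -sum1dep_card; under [RHS]eq_bigr do rewrite -sum1_card.
by rewrite pair_big_dep.
Qed.

Definition lt_pairs n := [set ab : 'I_n * 'I_n | ab.1 < ab.2].

Lemma sum_sym_irrefl n (R : rel 'I_n) : symmetric R -> irreflexive R ->
  \sum_a \sum_b R a b = 2 * #|[set ab in lt_pairs n | R ab.1 ab.2]|.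
Proof.
move=> R_sym R_irr.
have R_split a b : (R a b : nat) = ((a < b) && R a b) + ((b < a) && R b a).
  by case: (ltngtP a b) => [_|_|/val_inj ->]; rewrite ?ltnn ?R_irr ?(R_sym a b) ?addn0.
under eq_bigr do under eq_bigr do rewrite R_split.
under eq_bigr do rewrite big_split.
rewrite big_split /= [X in _ + X]exchange_big /= addnn -mul2n cards_sum pair_bigA.
by congr (2 * _); apply: eq_bigr => -[a b] _; rewrite inE.
Qed.

Lemma card_lt_pairs n : #|lt_pairs n| = n * n.-1 %/ 2.
Proof.
have neq_sym : symmetric (fun a b : 'I_n => a != b) by move=> a b; rewrite eq_sym.
have neq_irr : irreflexive (fun a b : 'I_n => a != b) by move=> a; rewrite eqxx.
have := sum_sym_irrefl neq_sym neq_irr.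
have -> : [set ab in lt_pairs n | ab.1 != ab.2] = lt_pairs n.
  by apply/setP => ab; rewrite !inE andb_idr // -val_eqE => lt_ab; rewrite neq_ltn lt_ab.
have row (a : 'I_n) : \sum_(b < n) (a != b : nat) = n.-1.
  have -> : n.-1 = #|[set b | b != a]|.
    rewrite (_ : [set b | b != a] = [set~ a]) ?cardsC1 ?card_ord //.
    by apply/setP => b; rewrite !inE.
  by rewrite cards_sum; apply: eq_bigr => b _; rewrite eq_sym.
under eq_bigr do rewrite row.
by rewrite sum_nat_const card_ord => ->; rewrite mulKn.
Qed.

Lemma card_diag_pairs n :
  #|[set ab : 'I_n * 'I_n | (ab \notin lt_pairs n) && ~~ (ab.2 < ab.1)]| = n.
Proof.
transitivity (\sum_(a < n) \sum_(b < n) ((a, b) \notin lt_pairs n) && ~~ (b < a));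
  first by rewrite cards_sum pair_bigA; apply: eq_bigr => -[a b].
rewrite -[RHS]card_ord -sum1_card; apply: eq_bigr => a _.
rewrite (bigD1 a) //= inE ltnn big1 // => b /negPf ba; rewrite inE /=.
by case: ltngtP => // /val_inj eq_ab; rewrite eq_ab eqxx in ba.
Qed.

Section EdgePairs.
Variables (n i : nat) (H : 'M[bool]_n).
Hypotheses (H_graph : is_graph H) (H_sum : \sum_a \sum_b (H a b : nat) = 2 * i).

Lemma card_edge_pairs : #|[set ab in lt_pairs n | H ab.1 ab.2]| = i.
Proof.
have := @sum_sym_irrefl n (fun a b => H a b).
move=> /(_ (fun a b => is_graph_sym a b H_graph) (fun a => is_graph_irrefl a H_graph)).
by rewrite H_sum => /eqP; rewrite eqn_mul2l => /eqP.
Qed.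

Lemma card_nonedge_pairs :
  #|[set ab in lt_pairs n | ~~ H ab.1 ab.2]| = n * n.-1 %/ 2 - i.
Proof.
have -> : [set ab in lt_pairs n | ~~ H ab.1 ab.2] = lt_pairs n :\: [set ab | H ab.1 ab.2].
  by apply/setP => ab; rewrite !inE andbC.
rewrite -card_lt_pairs -card_edge_pairs setIdE.
by rewrite -(cardsID [set ab | H ab.1 ab.2] (lt_pairs n)) addKn.
Qed.

End EdgePairs.

Lemma card_strict_upper q : #|strict_upper q| = 2 ^ (q * q.-1 %/ 2).
Proof.
pose mx_of (S : {set 'I_q * 'I_q}) : 'M[bool]_q := (\matrix_(x, y) ((x, y) \in S))%R.
have -> : strict_upper q = mx_of @: powerset (lt_pairs q).
  apply/setP => B; rewrite inE; apply/forallP/imsetP => [B_up | [S]].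
    exists [set xy | B xy.1 xy.2]; last by apply/matrixP => x y; rewrite !mxE inE.
    rewrite powersetE; apply/subsetP => -[x y]; rewrite !inE /= => Bxy.
    by have /forallP/(_ y)/implyP := B_up x; apply.
  rewrite powersetE => /subsetP S_lt -> x; apply/forallP => y; apply/implyP.
  by rewrite mxE => /S_lt; rewrite inE.
rewrite card_imset ?card_powerset ?card_lt_pairs // => S T /matrixP ST.
by apply/setP => -[x y]; have := ST x y; rewrite !mxE.
Qed.

Lemma card_not_lss q : #|~: lss_mx q| = N_e q.
Proof. by rewrite cardsCs setCK card_mx card_bool. Qed.

Lemma card_block_choices p q (H : 'M[bool]_p) i :
  is_graph H -> \sum_a \sum_b (H a b : nat) = 2 * i ->
  #|family (block_choice q H)|
  = N_e q ^ i * N_s q ^ (p * p.-1 %/ 2 - i) * 2 ^ (p * q * q.-1 %/ 2).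
Proof.
move=> H_graph H_sum.
rewrite card_family_prod (bigID (mem (lt_pairs p))) (bigID (fun ab => H ab.1 ab.2)) /=.
rewrite (eq_bigr (fun=> N_e q)) => [|ab /andP[]]; last first.
  by rewrite inE /block_choice => -> ->; rewrite card_not_lss.
rewrite [X in _ * X * _](eq_bigr (fun=> N_s q)) => [|ab /andP[]]; last first.
  by rewrite inE /block_choice => -> /negPf ->.
rewrite !prod_nat_cond_const (card_edge_pairs H_graph H_sum).
rewrite (card_nonedge_pairs H_graph H_sum); congr (_ * _).
rewrite (bigID (fun ab : 'I_p * 'I_p => ab.2 < ab.1)) /= big1 ?mul1n => [|ab]; last first.
  by rewrite inE => /andP[/negPf lt_ab lt_ba]; rewrite /block_choice lt_ab lt_ba cards1.
rewrite (eq_bigr (fun=> 2 ^ (q * q.-1 %/ 2))) => [|ab]; last first.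
  rewrite inE => /andP[/negPf lt_ab /negPf lt_ba].
  by rewrite /block_choice lt_ab lt_ba card_strict_upper.
rewrite prod_nat_cond_const card_diag_pairs.
have even_q : 2 %| q * q.-1 by case: q => [|q] //=; rewrite dvdn2 oddM /= andNb.
by rewrite -expnM mulnC -mulnA muln_divA.
Qed.

Definition pendant_graphs p i := [set H : 'M[bool]_p | [&& is_graph H,
  \sum_a \sum_b (H a b : nat) == 2 * i & [exists a, deg H a == 1]]].

Definition glue_data p q i :=
  [set HF : 'M[bool]_p * {ffun 'I_p * 'I_p -> 'M[bool]_q} |
    (HF.1 \in pendant_graphs p i) && (HF.2 \in family (block_choice q HF.1))].

Lemma card_glue_data p q i : #|glue_data p q i|
  = M_ p i * N_e q ^ i * N_s q ^ (p * p.-1 %/ 2 - i) * 2 ^ (p * q * q.-1 %/ 2).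
Proof.
rewrite (card_dep_pairs (fun H => H \in pendant_graphs p i)
  (fun H => family (block_choice q H))).
rewrite (eq_bigr (fun=> N_e q ^ i * N_s q ^ (p * p.-1 %/ 2 - i) * 2 ^ (p * q * q.-1 %/ 2))).
  by rewrite sum_nat_const !mulnA.
move=> H; rewrite /pendant_graphs in_set => /and3P[H_graph /eqP H_sum _].
exact: card_block_choices.
Qed.

Lemma sum_card_glue_data_le p q n :
  \sum_(1 <= i < n) #|glue_data p q i| <= L_e p q.
Proof.
rewrite big_geq_mkord -card_dep_pairs; set D := [set t | _].
have glue_injD : {in D &, injective (fun t => glue t.2.2)}.
  move=> [i1 [H1 F1]] [i2 [H2 F2]]; rewrite /pendant_graphs !in_set /=.
  move=> /andP[_ /andP[/and3P[H1_graph /eqP H1_sum _] F1_choice]].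
  move=> /andP[_ /andP[/and3P[H2_graph /eqP H2_sum _] F2_choice]].
  case/(glue_inj H1_graph H2_graph F1_choice F2_choice) => eq_H <-.
  have eq_i : i1 = i2.
    by apply/val_inj/eqP; rewrite -(eqn_pmul2l (isT : 0 < 2)) -H1_sum -H2_sum eq_H.
  by rewrite eq_H eq_i.
rewrite -(card_in_imset glue_injD).
apply/subset_leq_card/subsetP => _ /imsetP[[i [H F]] + ->].
rewrite /glue_data /pendant_graphs !in_set /=.
move=> /andP[_ /andP[/and3P[H_graph _ /existsP[a Ha]] F_choice]].
have [W_edge W_ent] := glue_entangled H_graph Ha F_choice.
rewrite (glue_is_graph F_choice) W_edge /asbool.
by case: excluded_middle_informative.
Qed.

Theorem mainTheorem3 (p q : nat) (hp : (0 < p)%N) (hq : (0 < q)%N) :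
  (\sum_(1 <= i < ((p.-1 * p.-2) %/ 2).+2)
      M_ p i * N_e q ^ i * N_s q ^ (p * p.-1 %/ 2 - i) * 2 ^ (p * q * q.-1 %/ 2)
   <= L_e p q)%N.
Proof.
rewrite (eq_bigr (fun i => #|glue_data p q i|)) => [|i _]; last exact/esym/card_glue_data.
exact: sum_card_glue_data_le.
Qed.
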